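(* Let $0<y\le1$. For all $z=u+iv$ with $v>0$ and $1-\sqrt y\le|u|\le1+\sqrt y$, $$|z+ys_y(z)|\ge\frac{1}{1+\sqrt y}.$$
   Context: $s_y(z)$ is the Stieltjes transform of the symmetrized Marchenko–Pastur law with parameter $y$, i.e. $s_y(z)=\frac{-(z+\frac{y-1}{z})+\sqrt{(z+\frac{y-1}{z})^2-4y}}{2y}$ with the branch of the square root chosen so that $\operatorname{Im}s_y(z)>0$; it is the solution with positive imaginary part of $ys^2+(z+\frac{y-1}{z})s+1=0$. *)

(* Complex numbers are modelled by an arbitrary
   numClosedFieldType C (e.g. the complex numbers); 'Re, 'Im, `|.|, sqrtC
   are the library notions. *)
From HB Require Import structures.
From mathcomp Require Import all_boot all_order all_algebra.
Set Implicit Arguments. Unset Strict Implicit. Unset Printing Implicit Defensive.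
Import Order.TTheory GRing.Theory Num.Theory.
Local Open Scope ring_scope.

(* is_sy y z s : s = s_y(z), the Stieltjes transform of the symmetrized
   Marchenko-Pastur law: the solution with positive imaginary part of
   y s^2 + (z + (y-1)/z) s + 1 = 0. *)
Definition is_sy (C : numClosedFieldType) (y z s : C) : Prop :=
  0 < 'Im s /\ y * s ^+ 2 + (z + (y - 1) / z) * s + 1 = 0.

From HB Require Import structures.
From mathcomp Require Import all_boot all_order all_algebra.
From mathcomp Require Import ring lra.
Set Implicit Arguments. Unset Strict Implicit. Unset Printing Implicit Defensive.
Import Order.TTheory GRing.Theory Num.Theory.
Local Open Scope ring_scope.

(* Put w = z + y s and r = sqrt y. The quadratic equation for s turns into
   w + 1/w = z + (1 - y)/z, and Im w > Im z > 0. Its imaginary and real parts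
   express Im w and Re w through z and K = |w|^2, and eliminating them leaves
   one equation in K, m = |z|^2 and (Re z)^2. If K (1 + r)^2 < 1, the imaginary
   part forces m < (1 - y) K; the equation then yields an inequality that
   survives lowering (Re z)^2 to (1 - r)^2 and raising K to (1 + r)^-2, where
   it becomes a polynomial inequality in r and m that fails on the whole
   admissible range of m. *)

(* C is only partially ordered; the real inequalities are proved in the real
   field formed by its real elements. *)
Section RealSubfield.
Variable C : numClosedFieldType.

Definition realC := {x : C | x \is Num.real}.
HB.instance Definition _ := [isSub for (@sval C _ : realC -> C)].
HB.instance Definition _ := [Choice of realC by <:].
HB.instance Definition _ := [SubChoice_isSubIntegralDomain of realC by <:].
HB.instance Definition _ := [SubIntegralDomain_isSubField of realC by <:].

Let le (x y : realC) := val x <= val y.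
Let lt (x y : realC) := val x < val y.
Let norm (x : realC) : realC := Sub `|val x| (normr_real (val x)).

Let le0_add x y : le 0 x -> le 0 y -> le 0 (x + y). Proof. exact: addr_ge0. Qed.
Let le0_mul x y : le 0 x -> le 0 y -> le 0 (x * y). Proof. exact: mulr_ge0. Qed.
Let le0_anti x : le 0 x -> le x 0 -> x = 0.
Proof. by move=> x_ge0 x_le0; apply: val_inj; apply/eqP; rewrite eq_le; apply/andP. Qed.
Let sub_ge0 x y : le 0 (y - x) = le x y. Proof. exact: subr_ge0. Qed.
Let le0_total x : le 0 x || le x 0. Proof. by have := valP x; rewrite realE. Qed.
Let normN x : norm (- x) = norm x. Proof. by apply: val_inj; rewrite /= normrN. Qed.
Let ge0_norm x : le 0 x -> norm x = x. Proof. by move=> x_ge0; apply: val_inj; rewrite /= ger0_norm. Qed.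
Let lt_def x y : lt x y = (y != x) && le x y. Proof. exact: lt_def. Qed.

HB.instance Definition _ := Num.IntegralDomain_isLeReal.Build realC
  le0_add le0_mul le0_anti sub_ge0 le0_total normN ge0_norm lt_def.

End RealSubfield.

(* For m = (1 - s) (1 - s + d), this cubic in d times (1 - s)^2 is
   - (1 + s)^8 * modulus_defect s (1 + s)^-2 m; the range of d corresponds to
   (1 - s)^2 <= m <= (1 - s^2) / (1 + s)^2. *)
Lemma threshold_cubic_gt0 (R : realFieldType) (s d : R) :
  0 < s < 1 -> 0 <= d -> d * (1 + s) <= s ^+ 2 ->
  0 < s ^+ 4 * (1 - s) ^+ 2 * (16 + 32 * s + 24 * s ^+ 2 + 8 * s ^+ 3 + s ^+ 4)
    + d * (s ^+ 4 * (1 - s) * (20 + 28 * s + 8 * s ^+ 2 - 4 * s ^+ 3 - 2 * s ^+ 4))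
    + d ^+ 2 * (s * (16 + 60 * s + 92 * s ^+ 2 + 75 * s ^+ 3 + 20 * s ^+ 4
                     - 18 * s ^+ 5 - 16 * s ^+ 6 - 4 * s ^+ 7)
                - d * ((1 - s) * (4 + 16 * s + 28 * s ^+ 2 + 28 * s ^+ 3
                                  + 17 * s ^+ 4 + 6 * s ^+ 5 + s ^+ 6))).
Proof.
move=> /andP[s_gt0 s_lt1] d_ge0 d_le.
have pow_le n m : (n <= m)%N -> s ^+ m <= s ^+ n by apply: ler_wiXn2l; lra.
have pow_ge0 n : 0 <= s ^+ n by apply: exprn_ge0; lra.
have pow_gt0 n : 0 < s ^+ n by apply: exprn_gt0.
have s43 : s ^+ 4 <= s ^+ 3 := pow_le 3 4 isT.
have s3 : s ^+ 3 <= 1 := pow_le 0 3 isT.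
have s4 : s ^+ 4 <= 1 := pow_le 0 4 isT.
have s64 : s ^+ 6 <= s ^+ 4 := pow_le 4 6 isT.
have s74 : s ^+ 7 <= s ^+ 4 := pow_le 4 7 isT.
have s84 : s ^+ 8 <= s ^+ 4 := pow_le 4 8 isT.
have s2_ge0 : 0 <= s ^+ 2 := pow_ge0 2.
have s3_ge0 : 0 <= s ^+ 3 := pow_ge0 3.
have s5_ge0 : 0 <= s ^+ 5 := pow_ge0 5.
have s6_ge0 : 0 <= s ^+ 6 := pow_ge0 6.
have s4_gt0 : 0 < s ^+ 4 := pow_gt0 4.
set P2 := s * _; set P3 := (1 - s) * _.
have cubic_ge0 : 0 <= P2 - d * P3.
  have hsum : 0 <= (1 + s) * P2 - s ^+ 2 * P3.
    have -> : (1 + s) * P2 - s ^+ 2 * P3 = s * (16 + 72 * s + 140 * s ^+ 2 + 155 * s ^+ 3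
       + 95 * s ^+ 4 + 13 * s ^+ 5 - 23 * s ^+ 6 - 15 * s ^+ 7 - 3 * s ^+ 8) by rewrite /P2 /P3; ring.
    apply: mulr_ge0; lra.
  have P3_ge0 : 0 <= P3 by apply: mulr_ge0; lra.
  have : d * (1 + s) * P3 <= s ^+ 2 * P3 by apply: ler_wpM2r.
  clearbody P2 P3 => dP3_le.
  have : 0 <= (1 + s) * (P2 - d * P3) by lra.
  by rewrite pmulr_rge0 //; lra.
have lead_gt0 : 0 < s ^+ 4 * (1 - s) ^+ 2 * (16 + 32 * s + 24 * s ^+ 2 + 8 * s ^+ 3 + s ^+ 4).
  by apply: mulr_gt0; [apply: mulr_gt0; [|apply: exprn_gt0]|]; lra.
have lin_ge0 : 0 <= d * (s ^+ 4 * (1 - s) * (20 + 28 * s + 8 * s ^+ 2 - 4 * s ^+ 3 - 2 * s ^+ 4)).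
  by apply: mulr_ge0 => //; apply: mulr_ge0; [apply: mulr_ge0|]; lra.
have : 0 <= d ^+ 2 * (P2 - d * P3) by apply: mulr_ge0; [apply: sqr_ge0|].
lra.
Qed.

Section ModulusDefect.
Variables (R : realFieldType) (s : R).

Local Notation c := (1 - s ^+ 2).
Local Notation e := ((1 - s) ^+ 2).
Local Notation q := ((1 + s) ^+ 2).

(* For K = |w|^2, m = |z|^2 and s = sqrt y: the relation left by eliminating
   Re w and Im w, with (Re z)^2 lowered to its least admissible value e. *)
Definition modulus_defect (K m : R) : R :=
  K * (1 + K) ^+ 2 * ((c - m) ^+ 2 * (m - e)) + K * (1 - K) ^+ 2 * (e * (m + c) ^+ 2)
  - m ^+ 2 * (1 - K) ^+ 2 * (1 + K) ^+ 2.

Lemma modulus_defect_ge0 (K m u : R) :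
  0 < K < 1 -> 0 < m < c * K -> e <= u ^+ 2 <= m ->
  m ^+ 2 * (1 - K) ^+ 2 * (1 + K) ^+ 2
    = K * ((1 + K) ^+ 2 * (m - u ^+ 2) * (c - m) ^+ 2 + (1 - K) ^+ 2 * u ^+ 2 * (m + c) ^+ 2) ->
  0 <= modulus_defect K m.
Proof.
move=> /andP[K_gt0 K_lt1] /andP[m_gt0 m_lt] /andP[e_le u2_le] modulusE.
pose D := (1 - K) ^+ 2 * (m + c) ^+ 2 - (1 + K) ^+ 2 * (c - m) ^+ 2.
have D_le0 : D <= 0.
  have -> : D = 4 * ((m - K * c) * (c - K * m)) by rewrite /D; ring.
  rewrite pmulr_rle0 //; apply: mulr_le0_ge0; first lra.
  have : 0 < (1 - K) * m by apply: mulr_gt0; lra.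
  nra.
have -> : modulus_defect K m = K * ((e - u ^+ 2) * D) by rewrite /modulus_defect modulusE /D; ring.
by apply: mulr_ge0; [lra | apply: mulr_le0; lra].
Qed.

Lemma modulus_defect_ge0_mono (K K' m : R) :
  e <= m -> 0 < K <= K' -> K' < 1 ->
  0 <= modulus_defect K m -> 0 <= modulus_defect K' m.
Proof.
move=> e_le /andP[K_gt0 K_le] K'_lt1.
pose A : R := (c - m) ^+ 2 * (m - e); pose B : R := e * (m + c) ^+ 2.
pose g (k : R) : R := k / (1 - k) ^+ 2 * A + k / (1 + k) ^+ 2 * B - m ^+ 2.
have defectE (k : R) : 0 < k < 1 -> modulus_defect k m = ((1 - k) * (1 + k)) ^+ 2 * g k.
  by move=> /andP[k_gt0 k_lt1]; rewrite /modulus_defect /g /A /B; field; lra.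
have w_gt0 (k : R) : 0 < k < 1 -> 0 < ((1 - k) * (1 + k)) ^+ 2.
  by move=> /andP[k_gt0 k_lt1]; apply: exprn_gt0; apply: mulr_gt0; lra.
have K_lt1 : K < 1 by lra.
have hK : 0 < K < 1 by apply/andP.
have hK' : 0 < K' < 1 by apply/andP; split; lra.
have A_ge0 : 0 <= A by apply: mulr_ge0; [apply: sqr_ge0 | lra].
have B_ge0 : 0 <= B by apply: mulr_ge0; apply: sqr_ge0.
have ratioM_le : K / (1 - K) ^+ 2 <= K' / (1 - K') ^+ 2.
  rewrite -subr_ge0.
  have -> : K' / (1 - K') ^+ 2 - K / (1 - K) ^+ 2
      = (K' - K) * (1 - K * K') / ((1 - K) ^+ 2 * (1 - K') ^+ 2) by field; lra.
  by apply: divr_ge0; [apply: mulr_ge0; nra | apply: mulr_ge0; apply: sqr_ge0].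
have ratioP_le : K / (1 + K) ^+ 2 <= K' / (1 + K') ^+ 2.
  rewrite -subr_ge0.
  have -> : K' / (1 + K') ^+ 2 - K / (1 + K) ^+ 2
      = (K' - K) * (1 - K * K') / ((1 + K) ^+ 2 * (1 + K') ^+ 2) by field; lra.
  by apply: divr_ge0; [apply: mulr_ge0; nra | apply: mulr_ge0; apply: sqr_ge0].
rewrite (defectE _ hK) (defectE _ hK') !pmulr_rge0 ?w_gt0 // /g.
have := ler_wpM2r A_ge0 ratioM_le; have := ler_wpM2r B_ge0 ratioP_le.
lra.
Qed.

Lemma modulus_defect_threshold_lt0 (m : R) :
  0 < s < 1 -> e <= m -> m * q <= c -> modulus_defect q^-1 m < 0.
Proof.
move=> s_bounds e_le mq_le; have /andP[s_gt0 s_lt1] := s_bounds.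
have s'_gt0 : 0 < 1 - s by lra.
pose d := m / (1 - s) - (1 - s).
have mE : m = (1 - s) * (1 - s + d) by rewrite /d; field; lra.
have d_ge0 : 0 <= d.
  by move: e_le; rewrite mE expr2 ler_pM2l //; lra.
have d_le : d * (1 + s) <= s ^+ 2.
  have : (1 + s) * (1 - s) * ((1 - s + d) * (1 + s) - 1) <= 0.
    by move: mq_le; rewrite mE; lra.
  by rewrite pmulr_rle0; [lra | apply: mulr_gt0; lra].
have := threshold_cubic_gt0 s_bounds d_ge0 d_le.
set cubic := (X in 0 < X) => cubic_gt0.
have q_gt0 : 0 < q by apply: exprn_gt0; lra.
have defectE : q ^+ 4 * modulus_defect q^-1 m = - ((1 - s) ^+ 2 * cubic).
  by rewrite /modulus_defect /cubic mE; field; lra.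
have : q ^+ 4 * modulus_defect q^-1 m < 0.
  by rewrite defectE oppr_lt0; apply: mulr_gt0 => //; apply: exprn_gt0.
by rewrite pmulr_rlt0 // exprn_gt0.
Qed.

End ModulusDefect.

Lemma modulus_ge_threshold (R : realFieldType) (s u v a b : R) :
  0 < s -> 1 - s <= `|u| -> 0 < v < a ->
  a * (1 - 1 / (b ^+ 2 + a ^+ 2)) = v * (1 - (1 - s ^+ 2) / (u ^+ 2 + v ^+ 2)) ->
  b * (1 + 1 / (b ^+ 2 + a ^+ 2)) = u * (1 + (1 - s ^+ 2) / (u ^+ 2 + v ^+ 2)) ->
  1 <= (b ^+ 2 + a ^+ 2) * (1 + s) ^+ 2.
Proof.
move=> s_gt0 u_ge /andP[v_gt0 v_lt_a] ImE ReE.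
set K := b ^+ 2 + a ^+ 2 in ImE ReE *; set m := u ^+ 2 + v ^+ 2 in ImE ReE.
set c := 1 - s ^+ 2 in ImE ReE; set q := (1 + s) ^+ 2.
rewrite leNgt; apply/negP => Kq_lt1.
have K_gt0 : 0 < K by rewrite /K; have := sqr_ge0 b; nra.
have q_gt1 : 1 < q by rewrite /q; nra.
have K_lt1 : K < 1 by nra.
have m_gt0 : 0 < m by rewrite /m; have := sqr_ge0 u; nra.
have ImE' : a * (1 - K) * m = v * (c - m) * K.
  apply/eqP; rewrite -subr_eq0.
  have -> : a * (1 - K) * m - v * (c - m) * K
      = - (K * m) * (a * (1 - 1 / K) - v * (1 - c / m)).
    by field; rewrite !lt0r_neq0.
  by rewrite ImE subrr mulr0.
have ReE' : b * (1 + K) * m = u * (m + c) * K.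
  apply/eqP; rewrite -subr_eq0.
  have -> : b * (1 + K) * m - u * (m + c) * K
      = K * m * (b * (1 + 1 / K) - u * (1 + c / m)).
    by field; rewrite !lt0r_neq0.
  by rewrite ReE subrr mulr0.
have m_lt : m < c * K.
  have : v * ((1 - K) * m) < a * ((1 - K) * m) by rewrite ltr_pM2r //; nra.
  rewrite !mulrA ImE' -!mulrA ltr_pM2l //; nra.
have c_gt0 : 0 < c by nra.
have s_lt1 : s < 1 by move: c_gt0; rewrite /c; nra.
have u2_ge : (1 - s) ^+ 2 <= u ^+ 2.
  by have := normr_ge0 u; rewrite -[u ^+ 2]real_normK ?num_real //; nra.
have modulusE : m ^+ 2 * (1 - K) ^+ 2 * (1 + K) ^+ 2
    = K * ((1 + K) ^+ 2 * (m - u ^+ 2) * (c - m) ^+ 2 + (1 - K) ^+ 2 * u ^+ 2 * (m + c) ^+ 2).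
  apply: (mulfI (lt0r_neq0 K_gt0)).
  have -> : K * (m ^+ 2 * (1 - K) ^+ 2 * (1 + K) ^+ 2)
      = (1 + K) ^+ 2 * (a * (1 - K) * m) ^+ 2 + (1 - K) ^+ 2 * (b * (1 + K) * m) ^+ 2.
    by rewrite /K; ring.
  by rewrite ImE' ReE' /m; ring.
have defect_ge0 : 0 <= modulus_defect s K m.
  apply: (modulus_defect_ge0 _ _ _ modulusE); apply/andP; split => //; rewrite /m; nra.
have e_le_m : (1 - s) ^+ 2 <= m by rewrite /m; have := sqr_ge0 v; lra.
have mq_le : m * q <= c by nra.
have K_bounds : 0 < K <= q^-1 by apply/andP; split; rewrite // -div1r ler_pdivlMr; lra.
have qV_lt1 : q^-1 < 1 by rewrite invf_lt1 //; lra.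
have s_bounds : 0 < s < 1 by apply/andP.
have := modulus_defect_threshold_lt0 s_bounds e_le_m mq_le.
by rewrite ltNge (modulus_defect_ge0_mono e_le_m K_bounds qV_lt1 defect_ge0).
Qed.

Lemma shifted_root_add_inv (F : fieldType) (y z s : F) :
  z != 0 -> z + y * s != 0 ->
  y * s ^+ 2 + (z + (y - 1) / z) * s + 1 = 0 ->
  (z + y * s) + 1 / (z + y * s) = z + (1 - y) / z.
Proof.
move=> z_neq0 w_neq0 quadE; apply/eqP; rewrite -subr_eq0.
have -> : z + y * s + 1 / (z + y * s) - (z + (1 - y) / z)
    = y / (z + y * s) * (y * s ^+ 2 + (z + (y - 1) / z) * s + 1).
  by field; rewrite z_neq0 w_neq0.
by rewrite quadE mulr0.
Qed.

Section RealDivParts.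
Variables (C : numClosedFieldType) (c x : C).
Hypothesis c_real : c \is Num.real.

Let scale_real : c / `|x| ^+ 2 \is Num.real.
Proof. by rewrite rpredM ?realV ?rpredX ?normr_real. Qed.

Lemma Re_add_real_div : 'Re (x + c / x) = 'Re x * (1 + c / ('Re x ^+ 2 + 'Im x ^+ 2)).
Proof. by rewrite raddfD /= invC_norm mulrA (ReMl scale_real) Re_conj normC2_Re_Im; ring. Qed.

Lemma Im_add_real_div : 'Im (x + c / x) = 'Im x * (1 - c / ('Re x ^+ 2 + 'Im x ^+ 2)).
Proof. by rewrite raddfD /= invC_norm mulrA (ImMl scale_real) Im_conj normC2_Re_Im; ring. Qed.

End RealDivParts.

Theorem mainTheorem12 (C : numClosedFieldType) (y z s : C)
  (hy0 : 0 < y) (hy1 : y <= 1)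
  (hv : 0 < 'Im z)
  (hu1 : 1 - sqrtC y <= `|'Re z|) (hu2 : `|'Re z| <= 1 + sqrtC y)
  (hs : is_sy y z s) :
  1 / (1 + sqrtC y) <= `|z + y * s|.
Proof.
case: hs => Im_s_gt0 quadE.
have r_gt0 : 0 < sqrtC y by rewrite sqrtC_gt0.
have yE : y = sqrtC y ^+ 2 by rewrite sqrtCK.
set w := z + y * s in quadE *.
have Im_lt : 'Im z < 'Im w by rewrite /w raddfD /= ImMl ?gtr0_real // ltrDl mulr_gt0.
have z_neq0 : z != 0 by apply: contraTneq hv => ->; rewrite raddf0 ltxx.
have w_neq0 : w != 0 by apply: contraTneq Im_lt => ->; rewrite raddf0 (lt_gtF hv).
have wE : w + 1 / w = z + (1 - y) / z := shifted_root_add_inv z_neq0 w_neq0 quadE.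
have ImE := congr1 (@Im C) wE; have ReE := congr1 (@Re C) wE.
rewrite !Im_add_real_div ?real1 ?rpredB ?gtr0_real // yE in ImE.
rewrite !Re_add_real_div ?real1 ?rpredB ?gtr0_real // yE in ReE.
pose S : realC C := Sub (sqrtC y) (gtr0_real r_gt0).
pose U : realC C := Sub ('Re z) (Creal_Re z).
pose V : realC C := Sub ('Im z) (Creal_Im z).
pose B : realC C := Sub ('Re w) (Creal_Re w).
pose A : realC C := Sub ('Im w) (Creal_Im w).
pose N : realC C := Sub `|w| (normr_real w).
have NE : N ^+ 2 = B ^+ 2 + A ^+ 2 by apply: val_inj; exact: normC2_Re_Im.
have S_gt0 : 0 < S := r_gt0.
have hU : 1 - S <= `|U| := hu1.
have VA : 0 < V < A by apply/andP.
have : 1 <= (B ^+ 2 + A ^+ 2) * (1 + S) ^+ 2.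
  by apply: (@modulus_ge_threshold _ S U V A B S_gt0 hU VA); apply: val_inj; [exact: ImE | exact: ReE].
rewrite -NE -exprMn => Nr_ge1.
suff : 1 / (1 + S) <= N by [].
rewrite ler_pdivrMr; last lra.
have : 0 <= N * (1 + S) by apply: mulr_ge0; [exact: normr_ge0 | lra].
nra.
Qed.
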